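(* Let $\bar Q$ be a locally gentle bound quiver. There is an integer $N$ (depending only on $\bar Q$) such that every finite face of the non-kissing complex $\mathcal K_{nk}(\bar Q)$ has at most $N$ elements.
   Context: Locally gentle bound quiver $\bar Q=(Q,I)$: $Q$ finite, $I$ an ideal of $kQ$ generated by paths of length two ($kQ/I$ possibly infinite-dimensional), each vertex with at most two incoming and two outgoing arrows, and for each arrow $\beta$ at most one $\alpha$ with $t(\alpha)=s(\beta)$, $\alpha\beta\notin I$, at most one with $\alpha\beta\in I$, and symmetrically on the outgoing side. $\bar Q^{\mathrm{bl}}$ adds degree-one blossom vertices and arrows so each vertex of $Q_0$ has two incoming and two outgoing arrows, relations completed to stay locally gentle. A walk is a maximal (finite, or eventually cyclic ${}^\infty(c_1^{\varepsilon_1})\sigma(c_2^{\varepsilon_2})^\infty$ with $c_i$ oriented cycles, possibly trivial) string of $\bar Q^{\mathrm{bl}}$, a string being a composable reduced word in arrows and formal inverses with no factor $\pi^{\pm1}$ for a path $\pi\in I$; $\omega\equiv\omega^{-1}$. A substring $\prod_{i'<\ell<j'}\alpha_\ell^{\varepsilon_\ell}$ of $\omega=\prod_{i<\ell<j}\alpha_\ell^{\varepsilon_\ell}$ ($i\le i'<j'\le j$, strict at finite ends, with position) is on top if ($i'=-\infty$ or $\varepsilon_{i'}=-1$) and ($j'=\infty$ or $\varepsilon_{j'}=1$), at the bottom if ($i'=-\infty$ or $\varepsilon_{i'}=1$) and ($j'=\infty$ or $\varepsilon_{j'}=-1$). $\omega$ kisses $\omega'$ if a finite string is a top substring of $\omega$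 and a bottom substring of $\omega'$. Faces of $\mathcal K_{nk}(\bar Q)$ are sets of pairwise non-kissing walks (none kissing itself). *)

From Stdlib Require Import ZArith.
From mathcomp Require Import all_boot.
Set Implicit Arguments. Unset Strict Implicit. Unset Printing Implicit Defensive.

(* A bound quiver with relations of length two: vertices V, arrows A,
   source s, target t, and r a b <-> the length-two path "a then b" lies in I
   (I is the ideal generated by these paths). *)

Section Quiver.
Variables (V A : finType) (s t : A -> V) (r : rel A).

Definition locally_gentle : Prop :=
  (forall a b, r a b -> t a = s b) /\
  (forall v, #|[set a | t a == v]| <= 2 /\ #|[set a | s a == v]| <= 2) /\
  (forall b a1 a2, t a1 = s b -> t a2 = s b -> ~~ r a1 b -> ~~ r a2 b -> a1 = a2) /\
  (forall b a1 a2, r a1 b -> r a2 b -> a1 = a2) /\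
  (forall a b1 b2, s b1 = t a -> s b2 = t a -> ~~ r a b1 -> ~~ r a b2 -> b1 = b2) /\
  (forall a b1 b2, r a b1 -> r a b2 -> b1 = b2).

End Quiver.

Definition is_blossoming (V A : finType) (s t : A -> V) (r : rel A)
    (V' A' : finType) (s' t' : A' -> V') (r' : rel A')
    (iv : V -> V') (ia : A -> A') : Prop :=
  injective iv /\ injective ia /\
  (forall a, s' (ia a) = iv (s a) /\ t' (ia a) = iv (t a)) /\
  (forall a b, r' (ia a) (ia b) = r a b) /\
  locally_gentle s' t' r' /\
  (forall v, #|[set a | t' a == iv v]| = 2 /\ #|[set a | s' a == iv v]| = 2) /\
  (forall w, w \notin codom iv ->
     #|[set a | t' a == w]| + #|[set a | s' a == w]| = 1) /\
  (forall a, a \notin codom ia -> (s' a \in codom iv) != (t' a \in codom iv)).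

(* Words: letters are (arrow, true) for a direct arrow and (arrow, false) for a
   formal inverse.  A word  prod_{lo < p < hi} lf p  with lo, hi in Z u {-oo,+oo}
   (None = infinite end). *)
Record word (A : Type) := Word { lo : option Z; hi : option Z; lf : Z -> A * bool }.

Definition inrange (A : Type) (w : word A) (p : Z) : Prop :=
  match lo w with None => True | Some l => (l < p)%Z end /\
  match hi w with None => True | Some h => (p < h)%Z end.

Section Strings.
Variables (V A : finType) (s t : A -> V) (r : rel A).

Definition lsrc (l : A * bool) : V := if l.2 then s l.1 else t l.1.
Definition ltgt (l : A * bool) : V := if l.2 then t l.1 else s l.1.

(* l1 l2 may be consecutive letters of a string: composable, reduced, and not
   a factor pi or pi^{-1} with pi a path in I. *)
Definition consec_ok (l1 l2 : A * bool) : Prop :=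
  ltgt l1 = lsrc l2 /\
  ~ (l1.1 = l2.1 /\ l1.2 <> l2.2) /\
  ~ (l1.2 && l2.2 && r l1.1 l2.1) /\
  ~ (~~ l1.2 && ~~ l2.2 && r l2.1 l1.1).

Definition is_string (w : word A) : Prop :=
  (exists p, inrange w p) /\
  forall p, inrange w p -> inrange w (p + 1) -> consec_ok (lf w p) (lf w (p + 1)).

Definition is_maximal (w : word A) : Prop :=
  (forall h, hi w = Some h -> forall l, ~ consec_ok (lf w (h - 1)) l) /\
  (forall l0, lo w = Some l0 -> forall l, ~ consec_ok l (lf w (l0 + 1))).

(* infinite ends are of the form c^eps repeated forever (c an oriented cycle) *)
Definition ends_cyclic (w : word A) : Prop :=
  (hi w = None -> exists (K p : Z) (eps : bool), (0 < p)%Z /\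
     forall i, (K <= i)%Z -> lf w (i + p) = lf w i /\ (lf w i).2 = eps) /\
  (lo w = None -> exists (K p : Z) (eps : bool), (0 < p)%Z /\
     forall i, (i <= K)%Z -> lf w (i - p) = lf w i /\ (lf w i).2 = eps).

Definition is_walk (w : word A) : Prop :=
  is_string w /\ is_maximal w /\ ends_cyclic w.

End Strings.

Definition rev_word (A : Type) (w : word A) : word A :=
  Word (option_map Z.opp (hi w)) (option_map Z.opp (lo w))
       (fun p => ((lf w (- p)).1, ~~ (lf w (- p)).2)).

Definition shift_word (A : Type) (w : word A) (k : Z) : word A :=
  Word (option_map (Z.add k) (lo w)) (option_map (Z.add k) (hi w))
       (fun p => lf w (p - k)).

Definition same_word (A : Type) (w w' : word A) : Prop :=
  lo w = lo w' /\ hi w = hi w' /\ forall p, inrange w p -> lf w p = lf w' p.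

(* omega == omega^{-1}, and words are considered up to shifting positions *)
Definition walk_equiv (A : Type) (w w' : word A) : Prop :=
  exists k, same_word (shift_word w k) w' \/ same_word (shift_word (rev_word w) k) w'.

(* Some finite string (substring at positions p < ... < p+n of w, resp.
   q < ... < q+n of w') is on top of w and at the bottom of w'. *)
Definition kiss0 (V A : finType) (s t : A -> V) (w w' : word A) : Prop :=
  exists (p q : Z) (n : nat), (0 < n)%N /\
    inrange w p /\ inrange w (p + Z.of_nat n) /\
    inrange w' q /\ inrange w' (q + Z.of_nat n) /\
    (lf w p).2 = false /\ (lf w (p + Z.of_nat n)).2 = true /\
    (lf w' q).2 = true /\ (lf w' (q + Z.of_nat n)).2 = false /\
    ltgt s t (lf w p) = ltgt s t (lf w' q) /\
    (forall m : nat, (0 < m < n)%N ->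
       lf w (p + Z.of_nat m) = lf w' (q + Z.of_nat m)).

Definition kisses (V A : finType) (s t : A -> V) (w w' : word A) : Prop :=
  kiss0 s t w w' \/ kiss0 s t w (rev_word w').

From Stdlib Require Import ZArith Lia Classical ClassicalEpsilon FunctionalExtensionality.
From mathcomp Require Import all_boot zify.
Set Implicit Arguments. Unset Strict Implicit. Unset Printing Implicit Defensive.

(* Call a position q of a walk W, together with an orientation b, extremal
   when no walk of the face (traversed in either direction) that runs along W
   through q first leaves W by a letter of orientation b.  At a first
   separation the two letters have opposite orientations (local gentleness),
   so two walks sharing an extremal letter and orientation can never
   separate: they are equal up to shift.  Hence a face injects into
   letters x orientations, of size 4 |A'| <= 16 |Q_0|.

   Extremal pairs exist.  Otherwise, starting from the right end of W (or
   from its periodic right tail) there is a walk following W from some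
   position l on and joining it at l by a letter of orientation b.  A walk
   leaving W at l - 1 with orientation b cannot also leave it on the right
   without kissing that walk or W, so it joins W further left.  But a join
   deep in the periodic left tail of W forces the joining walk to turn both
   near the join and near a turn of W, while the turns of the finitely many
   walks of a face lie in a fixed window of positions. *)

Lemma card_le2_eq (T : finType) (P : {set T}) (a b c : T) :
  (#|P| <= 2)%N -> a \in P -> b \in P -> c \in P -> b != a -> c != a -> b = c.
Proof.
move=> P2 Pa Pb Pc ba ca; apply/eqP; apply: contraTT P2 => bc.
have sub : [set a; b; c] \subset P.
  by apply/subsetP => x; rewrite !inE => /orP [/orP [] | ] /eqP ->.
rewrite -ltnNge (leq_trans _ (subset_leq_card sub)) //.
by rewrite -setUA cardsU1 cards2 !inE bc !negb_or eq_sym ba eq_sym ca.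
Qed.

Lemma bool_neq_negb (x y : bool) : x <> y -> y = ~~ x.
Proof. by case: x; case: y. Qed.

Lemma Z_ind_ge (P : Z -> Prop) (q : Z) :
  P q -> (forall y, (q <= y)%Z -> P y -> P (y + 1)%Z) -> forall y, (q <= y)%Z -> P y.
Proof. by apply: Z.right_induction => x y ->. Qed.

Lemma Z_ind_le (P : Z -> Prop) (q : Z) :
  P q -> (forall y, (y <= q)%Z -> P y -> P (y - 1)%Z) -> forall y, (y <= q)%Z -> P y.
Proof.
move=> Pq IH; apply: (Z.left_induction P _ q) => // y yq Py1.
by rewrite (_ : y = Z.succ y - 1)%Z; [apply: IH => //; lia | lia].
Qed.

Lemma Z_no_descent (P : Z -> Prop) (B : Z) :
  (forall l, P l -> (B <= l)%Z) -> (forall l, P l -> exists2 l', (l' < l)%Z & P l') ->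
  forall l, ~ P l.
Proof.
move=> lb desc.
have: forall y, (B <= y)%Z -> forall l, (l < y)%Z -> ~ P l.
  apply: Z_ind_ge => [l lB /lb|y _ IH l ly /desc [l' l'l /IH]]; lia.
by move=> H l Pl; apply: (H (Z.max B (l + 1)) _ l) => //; lia.
Qed.

Lemma finite_uniform_bound (I : finType) (P : I -> Z -> Prop) :
  (forall i m m', P i m -> (m <= m')%Z -> P i m') -> (forall i, exists m, P i m) ->
  exists m, forall i, P i m.
Proof.
move=> mono bnd.
suff [m Hm] : exists m, forall i, i \in enum I -> P i m.
  by exists m => i; apply: Hm; rewrite mem_enum.
elim: (enum I) => [|i0 l [m IH]]; first by exists 0%Z.
have [m0 H0] := bnd i0.
exists (Z.max m m0) => i; rewrite inE => /predU1P [->|il].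
- by apply: mono H0 _; lia.
- by apply: mono (IH i il) _; lia.
Qed.

Section Letters.
Variables (V A : finType) (s t : A -> V) (r : rel A).

Definition letter_inv (l : A * bool) : A * bool := (l.1, ~~ l.2).

Lemma letter_invK : involutive letter_inv.
Proof. by case=> a d; rewrite /letter_inv negbK. Qed.

Lemma lsrc_inv l : lsrc s t (letter_inv l) = ltgt s t l.
Proof. by case: l => a []. Qed.

Lemma ltgt_inv l : ltgt s t (letter_inv l) = lsrc s t l.
Proof. by case: l => a []. Qed.

Lemma consec_ok_inv l1 l2 :
  consec_ok s t r l1 l2 -> consec_ok s t r (letter_inv l2) (letter_inv l1).
Proof.
case: l1 l2 => a d [b e] [E [R [S1 S2]]].
split; first by rewrite ltgt_inv lsrc_inv.
split; first by case=> /= ba de; apply: R; split=> //; move: de; case: (d); case: (e).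
by split=> /=; [move: S2 | move: S1]; rewrite ?negbK; case: (d); case: (e).
Qed.

Hypothesis LG : locally_gentle s t r.

(* Two continuations of [l] with the same orientation either both avoid the
   relation with the arrow of [l] (gentleness), or both differ from that arrow
   at a vertex with at most two arrows on that side. *)
Lemma consec_ok_det_r l l1 l2 :
  consec_ok s t r l l1 -> consec_ok s t r l l2 -> l1.2 = l2.2 -> l1 = l2.
Proof.
case: LG => _ [deg [in_uniq [_ [out_uniq _]]]].
case: l l1 l2 => a d [b1 e] [b2 e2]; rewrite /consec_ok /ltgt /lsrc /=.
move=> [E1 [R1 [S1 T1]]] [E2 [R2 [S2 T2]]] Ee; subst e2.
congr pair; case: d e E1 R1 S1 T1 E2 R2 S2 T2 => -[] /= E1 R1 S1 T1 E2 R2 S2 T2.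
- by apply: (out_uniq a); rewrite -?E1 -?E2 //; apply/negP.
- apply: (card_le2_eq (proj1 (deg (t a))) (a := a)); rewrite ?inE -?E1 -?E2 //.
    by apply/eqP=> ba; apply: R1; rewrite ba.
  by apply/eqP=> ba; apply: R2; rewrite ba.
- apply: (card_le2_eq (proj2 (deg (s a))) (a := a)); rewrite ?inE -?E1 -?E2 //.
    by apply/eqP=> ba; apply: R1; rewrite ba.
  by apply/eqP=> ba; apply: R2; rewrite ba.
- by apply: (in_uniq a); rewrite -?E1 -?E2 //; apply/negP.
Qed.

Lemma consec_ok_det_l l l1 l2 :
  consec_ok s t r l1 l -> consec_ok s t r l2 l -> l1.2 = l2.2 -> l1 = l2.
Proof.
move=> /consec_ok_inv C1 /consec_ok_inv C2 E.
by apply: (can_inj letter_invK); apply: consec_ok_det_r C1 C2 _; rewrite /= E.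
Qed.

End Letters.

Section Words.
Variables (V A : finType) (s t : A -> V) (r : rel A).
Local Open Scope Z_scope.
Implicit Types (w X Y : word A).

Lemma inrange_between w a b c : inrange w a -> inrange w b -> a <= c <= b -> inrange w c.
Proof. by rewrite /inrange; case: (lo w) => [?|]; case: (hi w) => [?|] /=; lia. Qed.

Lemma inrange_rev w p : inrange (rev_word w) p <-> inrange w (- p).
Proof. by rewrite /inrange /=; case: (lo w) => [?|]; case: (hi w) => [?|] /=; lia. Qed.

Lemma inrange_shift w k p : inrange (shift_word w k) p <-> inrange w (p - k).
Proof. by rewrite /inrange /=; case: (lo w) => [?|]; case: (hi w) => [?|] /=; lia. Qed.

Lemma lf_rev w p : lf (rev_word w) p = letter_inv (lf w (- p)).
Proof. by []. Qed.

Lemma rev_wordK : involutive (@rev_word A).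
Proof.
case=> l h f; rewrite /rev_word /=; congr Word.
- by case: l => //= x; rewrite Z.opp_involutive.
- by case: h => //= x; rewrite Z.opp_involutive.
- by apply: functional_extensionality => p; rewrite Z.opp_involutive negbK; case: (f p).
Qed.

Definition maximal_string w := is_string s t r w /\ is_maximal s t r w.

Lemma maximal_string_rev w : maximal_string w -> maximal_string (rev_word w).
Proof.
move=> [[[p Ip] C] [Mh Ml]]; split; first split.
- by exists (- p); apply/inrange_rev; rewrite Z.opp_involutive.
- move=> p' /inrange_rev I1 /inrange_rev I2; rewrite !lf_rev; apply: consec_ok_inv.
  by have := C _ I2; rewrite (_ : - (p' + 1) + 1 = - p'); [apply | lia].
split=> [h Eh | l0 El0] l /consec_ok_inv; rewrite letter_invK.
- rewrite (_ : - (h - 1) = - h + 1); last lia.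
  by apply: Ml; move: Eh => /=; case: (lo w) => //= x [<-]; rewrite Z.opp_involutive.
- rewrite (_ : - (l0 + 1) = - l0 - 1); last lia.
  by apply: Mh; move: El0 => /=; case: (hi w) => //= x [<-]; rewrite Z.opp_involutive.
Qed.

Lemma maximal_string_next X Y a c : maximal_string X -> maximal_string Y ->
  inrange X a -> inrange X (a + 1) -> inrange Y c -> lf X a = lf Y c -> inrange Y (c + 1).
Proof.
move=> [[_ CX] _] [_ [MY _]] Ia Ia1 Ic E.
have C := CX a Ia Ia1; rewrite E in C.
move: Ic; rewrite /inrange; case Eh: (hi Y) => [h|]; last by case: (lo Y) => [?|]; lia.
have [Ehc|h_ne] := Z.eq_dec h (c + 1); last by case: (lo Y) => [?|]; lia.
by subst h; case: (MY _ Eh (lf X (a + 1))); rewrite Z.add_simpl_r.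
Qed.

Lemma maximal_string_prev X Y a c : maximal_string X -> maximal_string Y ->
  inrange X a -> inrange X (a - 1) -> inrange Y c -> lf X a = lf Y c -> inrange Y (c - 1).
Proof.
move=> [[_ CX] _] [_ [_ MY]] Ia Ia1 Ic E.
have C := CX (a - 1) Ia1; rewrite Z.sub_add E in C; have {}C := C Ia.
move: Ic; rewrite /inrange; case El: (lo Y) => [l|]; last by case: (hi Y) => [?|]; lia.
have [Elc|l_ne] := Z.eq_dec l (c - 1); last by case: (hi Y) => [?|]; lia.
by subst l; case: (MY _ El (lf X (a - 1))); rewrite Z.sub_add.
Qed.

Definition turn w m := inrange w m /\ inrange w (m + 1) /\ (lf w m).2 <> (lf w (m + 1)).2.

Lemma turn_rev w m : turn (rev_word w) m -> turn w (- m - 1).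
Proof.
rewrite /turn !inrange_rev !lf_rev /=.
have -> : - m - 1 + 1 = - m by lia.
have -> : - (m + 1) = - m - 1 by lia.
by case=> I1 [I2 T]; split=> //; split=> // E; apply: T; rewrite E.
Qed.

Lemma turnless_orient_const w p q : (forall m, ~ turn w m) ->
  inrange w p -> inrange w q -> (lf w p).2 = (lf w q).2.
Proof.
move=> noturn.
suff up : forall p q, p <= q -> inrange w p -> inrange w q -> (lf w p).2 = (lf w q).2.
  move=> Ip Iq; have [pq|qp] : p <= q \/ q <= p by lia.
  - exact: up.
  - by symmetry; apply: up.
move=> {}p {}q pq Ip; move: q pq; apply: Z_ind_ge => // y py IH Iy1.
have Iy : inrange w y by apply: inrange_between Ip Iy1 _; lia.
by rewrite (IH Iy); apply: NNPP => T; apply: (noturn y).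
Qed.

Lemma orient_eventually_r w : ends_cyclic w -> hi w = None ->
  exists K eps, forall i, K <= i -> (lf w i).2 = eps.
Proof. by move=> [Eh _] /Eh [K [p [eps [_ HK]]]]; exists K, eps => i /HK []. Qed.

Lemma orient_eventually_l w : ends_cyclic w -> lo w = None ->
  exists K eps, forall i, i <= K -> (lf w i).2 = eps.
Proof. by move=> [_ El] /El [K [p [eps [_ HK]]]]; exists K, eps => i /HK []. Qed.

Lemma turns_bounded w : ends_cyclic w -> exists M, forall m, turn w m -> Z.abs m <= M.
Proof.
move=> Ew.
have [L HL] : exists L, forall m, turn w m -> L <= m.
  case El: (lo w) => [l|]; first by exists l => m [Im _]; move: Im; rewrite /inrange El; lia.
  have [K [eps HK]] := orient_eventually_l Ew El.
  exists K => m [_ [_ T]]; apply/Z.nlt_ge => mK; apply: T; rewrite !HK //; lia.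
have [R HR] : exists R, forall m, turn w m -> m <= R.
  case Eh: (hi w) => [h|].
    by exists h => m [Im _]; move: Im; rewrite /inrange Eh; case: (lo w) => [?|]; lia.
  have [K [eps HK]] := orient_eventually_r Ew Eh.
  exists K => m [_ [_ T]]; apply/Z.nlt_ge => mK; apply: T; rewrite !HK //; lia.
by exists (Z.max (Z.abs L) (Z.abs R)) => m Tm; have := HL m Tm; have := HR m Tm; lia.
Qed.

Lemma lo_shift_of_agree X Y sh : maximal_string X -> maximal_string Y ->
  (forall y, inrange X y -> inrange Y (y + sh) /\ lf Y (y + sh) = lf X y) ->
  option_map (Z.add sh) (lo X) = lo Y.
Proof.
move=> MX MY AXY; have [[[p Ip] _] _] := MX.
case El: (lo X) => [l0|] /=; last first.
  case El': (lo Y) => [l'|] //.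
  have Iy : inrange X (Z.min p (l' - sh)).
    by move: Ip; rewrite /inrange El; case: (hi X) => [?|]; lia.
  by have [] := AXY _ Iy; rewrite /inrange El'; lia.
have I1 : inrange X (l0 + 1) by move: Ip; rewrite /inrange El; case: (hi X) => [?|]; lia.
have [IY1 EY1] := AXY _ I1.
have N0 : ~ inrange Y (l0 + 1 + sh - 1).
  by move=> IY0; have := maximal_string_prev MY MX IY1 IY0 I1 EY1; rewrite /inrange El; lia.
move: IY1 N0; rewrite /inrange; case: (lo Y) => [l'|]; case: (hi Y) => [?|] //=;
  by [lia | move=> *; congr Some; lia].
Qed.

Lemma hi_shift_of_agree X Y sh : maximal_string X -> maximal_string Y ->
  (forall y, inrange X y -> inrange Y (y + sh) /\ lf Y (y + sh) = lf X y) ->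
  option_map (Z.add sh) (hi X) = hi Y.
Proof.
move=> MX MY AXY; have [[[p Ip] _] _] := MX.
case Eh: (hi X) => [h0|] /=; last first.
  case Eh': (hi Y) => [h'|] //.
  have Iy : inrange X (Z.max p (h' - sh)).
    by move: Ip; rewrite /inrange Eh; case: (lo X) => [?|]; lia.
  by have [] := AXY _ Iy; rewrite /inrange Eh'; case: (lo Y) => [?|]; lia.
have I1 : inrange X (h0 - 1) by move: Ip; rewrite /inrange Eh; case: (lo X) => [?|]; lia.
have [IY1 EY1] := AXY _ I1.
have N0 : ~ inrange Y (h0 - 1 + sh + 1).
  by move=> IY0; have := maximal_string_next MY MX IY1 IY0 I1 EY1; rewrite /inrange Eh; lia.
move: IY1 N0; rewrite /inrange; case: (lo Y) => [?|]; case: (hi Y) => [h'|] //=;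
  by [lia | move=> *; congr Some; lia].
Qed.

Lemma same_word_of_agree X Y sh : maximal_string X -> maximal_string Y ->
  (forall y, inrange X y -> inrange Y (y + sh) /\ lf Y (y + sh) = lf X y) ->
  same_word (shift_word X sh) Y.
Proof.
move=> MX MY AXY; split; first exact: lo_shift_of_agree.
split; first exact: hi_shift_of_agree.
move=> p /inrange_shift /AXY [_]; rewrite /= (_ : p - sh + sh = p) //; lia.
Qed.

Lemma common_segment_kiss X Y p q n c : 0 < n ->
  inrange X p -> inrange X (p + n) -> inrange Y q -> inrange Y (q + n) ->
  (lf X p).2 = c -> (lf X (p + n)).2 = ~~ c -> (lf Y q).2 = ~~ c -> (lf Y (q + n)).2 = c ->
  ltgt s t (lf X p) = ltgt s t (lf Y q) ->
  (forall m, 0 < m < n -> lf X (p + m) = lf Y (q + m)) ->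
  kiss0 s t X Y \/ kiss0 s t Y X.
Proof.
move=> n_gt0 Ip Ipn Iq Iqn Xp Xpn Yq Yqn Et Emid.
have En : Z.of_nat (Z.to_nat n) = n by lia.
case: c Xp Xpn Yq Yqn => Xp Xpn Yq Yqn; [right; exists q, p | left; exists p, q];
  exists (Z.to_nat n); rewrite En; split; try lia; do 9!split => //.
- by move=> m mn; rewrite -Emid //; lia.
- by move=> m mn; rewrite Emid //; lia.
Qed.

Lemma common_segment_lsrc X Y p q (n : nat) : maximal_string X -> maximal_string Y ->
  (0 < n)%N -> inrange X p -> inrange X (p + Z.of_nat n) ->
  inrange Y q -> inrange Y (q + Z.of_nat n) ->
  ltgt s t (lf X p) = ltgt s t (lf Y q) ->
  (forall m : nat, (0 < m < n)%N -> lf X (p + Z.of_nat m) = lf Y (q + Z.of_nat m)) ->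
  lsrc s t (lf X (p + Z.of_nat n)) = lsrc s t (lf Y (q + Z.of_nat n)).
Proof.
move=> [[_ CX] _] [[_ CY] _] n_gt0 Ip Ipn Iq Iqn Et Emid.
have Sn z : z + Z.of_nat n.-1 + 1 = z + Z.of_nat n by lia.
have Ip' : inrange X (p + Z.of_nat n.-1) by apply: inrange_between Ip Ipn _; lia.
have Iq' : inrange Y (q + Z.of_nat n.-1) by apply: inrange_between Iq Iqn _; lia.
have := CX _ Ip'; have := CY _ Iq'; rewrite !Sn => /(_ Iqn) [<- _] /(_ Ipn) [<- _].
case: n n_gt0 {Ipn Iqn Sn Ip' Iq'} Emid => [//|[_ _|n _ Emid]].
- by rewrite !Z.add_0_r.
- by rewrite Emid //; lia.
Qed.

Lemma kiss0_rev X Y : maximal_string X -> maximal_string Y ->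
  kiss0 s t X Y -> kiss0 s t (rev_word X) (rev_word Y).
Proof.
move=> MX MY [p [q [n [n_gt0 [Ip [Ipn [Iq [Iqn [Xp [Xpn [Yq [Yqn [Et Emid]]]]]]]]]]]]].
exists (- (p + Z.of_nat n)), (- (q + Z.of_nat n)), n; split=> //.
rewrite !inrange_rev !lf_rev /= !Z.opp_involutive.
have -> : - (p + Z.of_nat n) + Z.of_nat n = - p by lia.
have -> : - (q + Z.of_nat n) + Z.of_nat n = - q by lia.
rewrite !Z.opp_involutive Xp Xpn Yq Yqn !ltgt_inv.
do 8!split => //; split; first exact: common_segment_lsrc.
move=> m mn.
have -> : - (- (p + Z.of_nat n) + Z.of_nat m) = p + Z.of_nat (n - m) by lia.
have -> : - (- (q + Z.of_nat n) + Z.of_nat m) = q + Z.of_nat (n - m) by lia.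
by rewrite Emid //; lia.
Qed.

Hypothesis LG : locally_gentle s t r.

Lemma diverge_orient_r X Y a c : maximal_string X -> maximal_string Y ->
  inrange X (a - 1) -> inrange X a -> inrange Y (c - 1) -> inrange Y c ->
  lf X (a - 1) = lf Y (c - 1) -> lf Y c <> lf X a -> (lf Y c).2 = ~~ (lf X a).2.
Proof.
move=> [[_ CX] _] [[_ CY] _] Ia0 Ia Ic0 Ic E D; apply: bool_neq_negb => O; apply: D.
have := CY _ Ic0; have := CX _ Ia0; rewrite !Z.sub_add => /(_ Ia) CXa /(_ Ic) CYc.
by apply: (consec_ok_det_r LG CYc _ (esym O)); rewrite -E.
Qed.

Lemma diverge_orient_l X Y a c : maximal_string X -> maximal_string Y ->
  inrange X a -> inrange X (a + 1) -> inrange Y c -> inrange Y (c + 1) ->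
  lf X (a + 1) = lf Y (c + 1) -> lf Y c <> lf X a -> (lf Y c).2 = ~~ (lf X a).2.
Proof.
move=> [[_ CX] _] [[_ CY] _] Ia Ia1 Ic Ic1 E D; apply: bool_neq_negb => O; apply: D.
by apply: (consec_ok_det_l LG (CY _ Ic Ic1) _ (esym O)); rewrite -E; apply: CX.
Qed.

End Words.

Section Extremal.
Variables (V A : finType) (s t : A -> V) (r : rel A).
Hypothesis LG : locally_gentle s t r.
Local Open Scope Z_scope.

Variable S : word A -> Prop.
Hypothesis S_maximal : forall X, S X -> maximal_string s t r X.
Hypothesis S_nonkissing : forall X Y, S X -> S Y -> ~ kiss0 s t X Y.

Section Along.
Variable W : word A.

Definition agree_at (Y : word A) sh x :=
  inrange W x /\ inrange Y (x + sh) /\ lf Y (x + sh) = lf W x.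
Definition differ_at (Y : word A) sh x :=
  inrange W x /\ inrange Y (x + sh) /\ lf Y (x + sh) <> lf W x.
Definition first_divergence Y sh q x :=
  differ_at Y sh x /\ forall y, q <= y < x \/ x < y <= q -> agree_at Y sh y.
Definition leaves_with Y sh q b :=
  exists2 x, first_divergence Y sh q x & (lf Y (x + sh)).2 = b.
Definition extremal q b := forall Y sh, S Y -> agree_at Y sh q -> ~ leaves_with Y sh q b.
Definition joins_at b l := exists Y sh, [/\ S Y, inrange W l,
  forall y, l <= y -> inrange W y -> agree_at Y sh y,
  differ_at Y sh (l - 1) & (lf Y (l - 1 + sh)).2 = b].

Hypothesis SW : S W.

Lemma not_extremal_leaves q b : ~ extremal q b ->
  exists Y sh, [/\ S Y, agree_at Y sh q & leaves_with Y sh q b].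
Proof.
by move=> NE; apply: NNPP => H; apply: NE => Y sh SY Aq Lq; apply: H; exists Y, sh.
Qed.

Lemma agree_at_self y : inrange W y -> agree_at W 0 y.
Proof. by move=> Iy; rewrite /agree_at Z.add_0_r. Qed.

Lemma ltgt_before_agree Y sh x : S Y -> inrange W x -> inrange Y (x + sh) ->
  agree_at Y sh (x + 1) -> ltgt s t (lf Y (x + sh)) = ltgt s t (lf W x).
Proof.
move=> SY Ix Iy [Ix1 [Iy1 E]].
have [[[_ CW] _] [[_ CY] _]] := (S_maximal SW, S_maximal SY).
have shE : x + 1 + sh = x + sh + 1 by lia.
rewrite shE in Iy1 E.
by rewrite (proj1 (CY _ Iy Iy1)) (proj1 (CW _ Ix Ix1)) E.
Qed.

(* The stretch (x, x') would be on top of one word and at the bottom of the other. *)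
Lemma no_kiss_along Y1 Y2 sh1 sh2 x x' c : S Y1 -> S Y2 -> x < x' ->
  inrange Y1 (x + sh1) -> inrange Y1 (x' + sh1) ->
  inrange Y2 (x + sh2) -> inrange Y2 (x' + sh2) ->
  (forall y, x < y < x' -> agree_at Y1 sh1 y /\ agree_at Y2 sh2 y) ->
  ltgt s t (lf Y1 (x + sh1)) = ltgt s t (lf Y2 (x + sh2)) ->
  (lf Y1 (x + sh1)).2 = c -> (lf Y1 (x' + sh1)).2 = ~~ c ->
  (lf Y2 (x + sh2)).2 = ~~ c -> (lf Y2 (x' + sh2)).2 = c -> False.
Proof.
move=> S1 S2 xx' I1 I1' I2 I2' Amid Et O1 O1' O2 O2'.
have n_gt0 : 0 < x' - x by lia.
have E1 : x + sh1 + (x' - x) = x' + sh1 by lia.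
have E2 : x + sh2 + (x' - x) = x' + sh2 by lia.
rewrite -E1 in I1' O1'; rewrite -E2 in I2' O2'.
have Emid m : 0 < m < x' - x -> lf Y1 (x + sh1 + m) = lf Y2 (x + sh2 + m).
  move=> m_lt; have [[_ [_ A1]] [_ [_ A2]]] := Amid (x + m) ltac:(lia).
  have -> : x + sh1 + m = x + m + sh1 by lia.
  have -> : x + sh2 + m = x + m + sh2 by lia.
  by rewrite A1 A2.
by have [] := common_segment_kiss n_gt0 I1 I1' I2 I2' O1 O1' O2 O2' Et Emid; apply: S_nonkissing.
Qed.

Lemma first_divergence_orient Y sh q x : S Y -> agree_at Y sh q ->
  first_divergence Y sh q x -> (lf Y (x + sh)).2 = ~~ (lf W x).2.
Proof.
move=> SY Aq [[Ix [Iy D]] Amid].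
have [MW MY] := (S_maximal SW, S_maximal SY).
have [qx|[qx|xq]] := Z.lt_trichotomy q x.
- have [I1 [I2 E]] := Amid (x - 1) ltac:(lia).
  have shE : x - 1 + sh = x + sh - 1 by lia.
  rewrite shE in I2 E.
  exact (diverge_orient_r LG MW MY I1 Ix I2 Iy (esym E) D).
- by subst q; case: Aq => _ [_ /D].
- have [I1 [I2 E]] := Amid (x + 1) ltac:(lia).
  have shE : x + 1 + sh = x + sh + 1 by lia.
  rewrite shE in I2 E.
  exact (diverge_orient_l LG MW MY Ix I1 Iy I2 (esym E) D).
Qed.

Lemma first_divergence_r_uniq Y sh q x x' : q < x -> q < x' ->
  first_divergence Y sh q x -> first_divergence Y sh q x' -> x = x'.
Proof.
move=> qx qx' [[_ [_ D]] Amid] [[_ [_ D']] Amid'].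
have [xx'|[//|x'x]] := Z.lt_trichotomy x x'.
- by case: (Amid' x ltac:(lia)) => _ [_ /D].
- by case: (Amid x' ltac:(lia)) => _ [_ /D'].
Qed.

Lemma agree_or_diverge_r Y sh q : S Y -> agree_at Y sh q ->
  (forall y, q <= y -> inrange W y -> agree_at Y sh y) \/
  exists2 x, q < x & first_divergence Y sh q x.
Proof.
move=> SY Aq; case: (classic (exists2 x, q < x & first_divergence Y sh q x)) => [|noD];
  [by right | left].
suff agree_upto : forall y, q <= y -> forall z, q <= z <= y -> inrange W z -> agree_at Y sh z.
  by move=> y qy; apply: (agree_upto y) => //; lia.
apply: Z_ind_ge => [z zq _|y qy IH z zy Iz]; first by have -> : z = q by lia.
have [zy'|{zy}zE] : z <= y \/ z = y + 1 by lia.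
  by apply: IH => //; lia.
subst z.
have Iy : inrange W y by apply: inrange_between (proj1 Aq) Iz _; lia.
have [_ [Iy' Ey]] := IH y ltac:(lia) Iy.
have Iy1 : inrange Y (y + 1 + sh).
  rewrite (_ : y + 1 + sh = y + sh + 1); last lia.
  exact: maximal_string_next (S_maximal SW) (S_maximal SY) Iy Iz Iy' (esym Ey).
split=> //; split=> //; apply: NNPP => D; apply: noD; exists (y + 1); first lia.
split=> [//|u u_in]; apply: IH; [lia | apply: inrange_between (proj1 Aq) Iz _; lia].
Qed.

Lemma agree_or_diverge_l Y sh q : S Y -> agree_at Y sh q ->
  (forall y, y <= q -> inrange W y -> agree_at Y sh y) \/
  exists2 x, x < q & first_divergence Y sh q x.
Proof.
move=> SY Aq; case: (classic (exists2 x, x < q & first_divergence Y sh q x)) => [|noD];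
  [by right | left].
suff agree_downto : forall y, y <= q -> forall z, y <= z <= q -> inrange W z -> agree_at Y sh z.
  by move=> y yq; apply: (agree_downto y) => //; lia.
apply: Z_ind_le => [z zq _|y yq IH z zy Iz]; first by have -> : z = q by lia.
have [zy'|{zy}zE] : y <= z \/ z = y - 1 by lia.
  by apply: IH => //; lia.
subst z.
have Iy : inrange W y by apply: inrange_between Iz (proj1 Aq) _; lia.
have [_ [Iy' Ey]] := IH y ltac:(lia) Iy.
have Iy1 : inrange Y (y - 1 + sh).
  rewrite (_ : y - 1 + sh = y + sh - 1); last lia.
  exact: maximal_string_prev (S_maximal SW) (S_maximal SY) Iy Iz Iy' (esym Ey).
split=> //; split=> //; apply: NNPP => D; apply: noD; exists (y - 1); first lia.
split=> [//|u u_in]; apply: IH; [lia | apply: inrange_between Iz (proj1 Aq) _; lia].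
Qed.

Lemma first_divergences_orient_eq Y sh q x x' : S Y -> agree_at Y sh q -> x < q -> q < x' ->
  first_divergence Y sh q x -> first_divergence Y sh q x' ->
  (lf Y (x + sh)).2 = (lf Y (x' + sh)).2.
Proof.
move=> SY Aq xq qx' Fx Fx'.
have Ox := first_divergence_orient SY Aq Fx.
have Ox' := first_divergence_orient SY Aq Fx'.
case: Fx Fx' => [[Ix [Iy _]] Amid] [[Ix' [Iy' _]] Amid'].
apply: NNPP => /bool_neq_negb O.
have Aalong y : x < y < x' -> agree_at Y sh y.
  by move=> xyx; case: (Z_le_gt_dec y q) => yq; [apply: Amid | apply: Amid']; lia.
have IWx : inrange W (x + 0) by rewrite Z.add_0_r.
have IWx' : inrange W (x' + 0) by rewrite Z.add_0_r.
apply: (no_kiss_along SY SW (Z.lt_trans _ _ _ xq qx') Iy Iy' IWx IWx' _ _ erefl O).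
- by move=> y /Aalong Ay; split=> //; apply: agree_at_self; case: Ay.
- by rewrite Z.add_0_r ltgt_before_agree //; apply: Aalong; lia.
- by rewrite Z.add_0_r Ox negbK.
- by rewrite Z.add_0_r; apply: negb_inj; rewrite -Ox' O.
Qed.

Lemma joins_at_orient Y sh l : S Y -> inrange W l ->
  (forall y, l <= y -> inrange W y -> agree_at Y sh y) -> differ_at Y sh (l - 1) ->
  (lf Y (l - 1 + sh)).2 = ~~ (lf W (l - 1)).2.
Proof.
move=> SY Il Aright Dl.
apply: (first_divergence_orient SY (q := l)); first exact: Aright (Z.le_refl l) Il.
split=> // y yl; have -> : y = l by lia.
exact: Aright (Z.le_refl l) Il.
Qed.

Lemma joins_at_no_right_leave b l Y sh Y' sh' x' : S Y -> S Y' -> inrange W l ->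
  (forall y, l <= y -> inrange W y -> agree_at Y sh y) -> differ_at Y sh (l - 1) ->
  (lf Y (l - 1 + sh)).2 = b -> agree_at Y' sh' (l - 1) -> l - 1 < x' ->
  first_divergence Y' sh' (l - 1) x' -> (lf Y' (x' + sh')).2 = b -> False.
Proof.
move=> SY SY' Il Aright Dl Ob Al lx' Fx' Ob'.
have OY := joins_at_orient SY Il Aright Dl.
have Ox' := first_divergence_orient SY' Al Fx'.
case: Dl Fx' => [Il1 [Iyl _]] [[Ix' [Iy' _]] Amid].
have [_ [Iyx' Eyx']] := Aright x' ltac:(lia) Ix'.
have [_ [Iyl' Eyl']] := Al.
apply: (no_kiss_along SY SY' lx' Iyl Iyx' Iyl' Iy' _ _ Ob _ _ Ob').
- move=> y yx; split; last by apply: Amid; lia.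
  by apply: Aright; [lia | apply: inrange_between Il Ix' _; lia].
- rewrite (ltgt_before_agree SY Il1 Iyl) ?Eyl' // Z.sub_add.
  exact: Aright (Z.le_refl l) Il.
- by rewrite Eyx' -Ob' Ox' negbK.
- by rewrite Eyl' -Ob OY negbK.
Qed.

Lemma joins_at_step b : (forall q, inrange W q -> ~ extremal q b) ->
  forall l, joins_at b l -> exists2 l', l' < l & joins_at b l'.
Proof.
move=> NE l [Y [sh [SY Il Aright Dl Ob]]].
have Il1 := proj1 Dl.
have [Y' [sh' [SY' Al [xv Fv Ov]]]] := not_extremal_leaves (NE _ Il1).
have [Aright'|[x' lx' Fx']] := agree_or_diverge_r SY' Al; last first.
  exfalso; case: (eqVneq (lf Y' (x' + sh')).2 b) => Ob'.
    exact: joins_at_no_right_leave SY SY' Il Aright Dl Ob Al lx' Fx' Ob'.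
  have [xvl|[xvl|lxv]] := Z.lt_trichotomy xv (l - 1).
  - by move: Ob'; rewrite -(first_divergences_orient_eq SY' Al xvl lx' Fv Fx') Ov eqxx.
  - by case: Fv => [[_ [_ Dv]] _]; case: Al => _ [_]; rewrite -xvl.
  - by move: Ob'; rewrite -(first_divergence_r_uniq lxv lx' Fv Fx') Ov eqxx.
have xvl : xv < l - 1.
  case: Fv => [[Ixv [_ Dxv]] _]; apply/Z.nle_gt => lxv.
  by case: (Aright' xv lxv Ixv) => _ [_ /Dxv].
exists (xv + 1); first lia.
case: Fv => Dv Amid; exists Y', sh'; split=> //; rewrite ?Z.add_simpl_r //.
- by apply: inrange_between (proj1 Dv) Il1 _; lia.
- move=> y xy Iy; case: (Z_le_gt_dec y (l - 1)) => yl; first by apply: Amid; lia.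
  by apply: Aright' => //; lia.
Qed.

Lemma joins_at_of_hi b h : hi W = Some h -> (forall q, inrange W q -> ~ extremal q b) ->
  exists l, joins_at b l.
Proof.
move=> Eh NE; have [[[p Ip] _] _] := S_maximal SW.
have Ih : inrange W (h - 1) by move: Ip; rewrite /inrange Eh; case: (lo W) => [?|]; lia.
have [Y [sh [SY Ah [x Fx Ox]]]] := not_extremal_leaves (NE _ Ih).
case: Fx => [[Ix [Iy Dx]] Amid].
have xh : x < h - 1.
  have [//|[xh|]] := Z.lt_trichotomy x (h - 1).
  - by case: Ah => _ [_]; rewrite -xh.
  - by move: Ix; rewrite /inrange Eh; lia.
exists (x + 1), Y, sh; split=> //; rewrite ?Z.add_simpl_r //.
- by apply: inrange_between Ix Ih _; lia.
- by move=> y xy Iwy; apply: Amid; move: Iwy; rewrite /inrange Eh; case: (lo W) => [?|]; lia.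
Qed.

Lemma joins_at_of_tail K eps : hi W = None -> (forall i, K <= i -> (lf W i).2 = eps) ->
  (forall q, inrange W q -> ~ extremal q eps) -> exists l, joins_at eps l.
Proof.
move=> Eh HK NE; have [[[p Ip] _] _] := S_maximal SW.
pose q := Z.max K p.
have Iq : inrange W q by move: Ip; rewrite /inrange Eh; case: (lo W) => [?|]; lia.
have [Y [sh [SY Aq [x Fx Ox]]]] := not_extremal_leaves (NE _ Iq).
have xq : x < q.
  have [//|[xq|qx]] := Z.lt_trichotomy x q.
  - by case: Fx => [[_ [_ Dx]] _]; case: Aq => _ [_]; rewrite -xq.
  - have := first_divergence_orient SY Aq Fx; rewrite Ox HK; last lia.
    by case: (eps).
have Aright : forall y, q <= y -> inrange W y -> agree_at Y sh y.
  have [//|[x' qx' Fx']] := agree_or_diverge_r SY Aq.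
  have := first_divergences_orient_eq SY Aq xq qx' Fx Fx'.
  rewrite Ox (first_divergence_orient SY Aq Fx') HK; last lia.
  by case: (eps).
case: Fx => Dx Amid; exists (x + 1), Y, sh; split=> //; rewrite ?Z.add_simpl_r //.
- by apply: inrange_between (proj1 Dx) Iq _; lia.
- move=> y xy Iy; case: (Z_le_gt_dec y q) => yq; first by apply: Amid; lia.
  by apply: Aright => //; lia.
Qed.

Variable M : Z.
Hypothesis S_turns : forall X m, S X -> turn X m -> Z.abs m <= M.

Lemma joins_at_lower_bound b t0 : turn W t0 -> ends_cyclic W ->
  exists B, forall l, joins_at b l -> B <= l.
Proof.
move=> Tt0 EW.
case El: (lo W) => [l0|].
  by exists l0 => l [Y [sh [_ Il _ _ _]]]; move: Il; rewrite /inrange El; lia.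
have [K [eps HK]] := orient_eventually_l EW El.
have Kt0 : K <= t0.
  by apply/Z.nlt_ge => t0K; case: Tt0 => _ [_]; rewrite !HK //; lia.
exists (Z.min (K + 1) (t0 + 1 - 2 * M)) => l [Y [sh [SY Il Aright Dl Ob]]].
case: (Z_le_gt_dec l K) => lK; last lia.
have OY := joins_at_orient SY Il Aright Dl.
have [_ [Iyl Eyl]] := Aright l (Z.le_refl l) Il.
have turn_l : turn Y (l - 1 + sh).
  have lE : l - 1 + sh + 1 = l + sh by lia.
  case: Dl => _ [Iy1 _]; rewrite /turn lE OY Eyl !HK; try lia.
  by split=> //; split=> //; case: (eps).
have turn_t0 : turn Y (t0 + sh).
  case: Tt0 => It0 [It1 T]; have tE : t0 + sh + 1 = t0 + 1 + sh by lia.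
  have [_ [Iy0 E0]] := Aright t0 ltac:(lia) It0.
  have [_ [Iy1 E1]] := Aright (t0 + 1) ltac:(lia) It1.
  by rewrite /turn tE E0 E1.
by have := S_turns SY turn_l; have := S_turns SY turn_t0; lia.
Qed.

Lemma extremal_of_no_turn q : (forall m, ~ turn W m) -> inrange W q -> extremal q (lf W q).2.
Proof.
move=> noturn Iq Y sh SY Aq [x Fx Ox].
have := first_divergence_orient SY Aq Fx.
by rewrite Ox (turnless_orient_const noturn Iq (proj1 (proj1 Fx))); case: (lf W x).2.
Qed.

Lemma extremal_exists : ends_cyclic W -> exists q b, inrange W q /\ extremal q b.
Proof.
move=> EW; have [[[p0 Ip0] _] _] := S_maximal SW.
apply: NNPP => noext.
have NE b q : inrange W q -> ~ extremal q b by move=> Iq Eq; apply: noext; exists q, b.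
have [[t0 Tt0]|noturn] := classic (exists t0, turn W t0); last first.
  by apply: (NE _ p0 Ip0); apply: extremal_of_no_turn => // m Tm; apply: noturn; exists m.
have [b [l Jl]] : exists b l, joins_at b l.
  case Eh: (hi W) => [h|].
  - by exists true; apply: joins_at_of_hi Eh (NE true).
  - have [K [eps HK]] := orient_eventually_r EW Eh.
    by exists eps; apply: joins_at_of_tail Eh HK (NE eps).
have [B HB] := joins_at_lower_bound b Tt0 EW.
exact: Z_no_descent HB (joins_at_step (NE b)) l Jl.
Qed.

End Along.

Lemma agree_at_sym W Y sh x : agree_at W Y sh x -> agree_at Y W (- sh) (x + sh).
Proof.
by case=> Ix [Iy E]; rewrite /agree_at (_ : x + sh + - sh = x) //; lia.
Qed.

Lemma first_divergence_sym W Y sh q x : first_divergence W Y sh q x ->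
  first_divergence Y W (- sh) (q + sh) (x + sh).
Proof.
move=> [[Ix [Iy D]] Amid]; split.
  rewrite /differ_at (_ : x + sh + - sh = x); last lia.
  by split=> //; split=> //; apply: nesym.
move=> y y_in; have -> : y = y - sh + sh by lia.
by apply: agree_at_sym; apply: Amid; lia.
Qed.

Lemma extremal_agree Wi Wj qi qj b : S Wi -> S Wj -> inrange Wi qi -> inrange Wj qj ->
  lf Wi qi = lf Wj qj -> extremal Wi qi b -> extremal Wj qj b ->
  forall y, inrange Wi y -> agree_at Wi Wj (qj - qi) y.
Proof.
move=> Si Sj Ii Ij E Exi Exj; pose sh := qj - qi.
have qjE : qi + sh = qj by rewrite /sh; lia.
have Ai : agree_at Wi Wj sh qi by rewrite /agree_at qjE.
have Aj : agree_at Wj Wi (- sh) qj by rewrite -qjE; apply: agree_at_sym.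
have noD x : ~ first_divergence Wi Wj sh qi x.
  move=> Fx; have Ox := first_divergence_orient Si Sj Ai Fx.
  case: (eqVneq (lf Wj (x + sh)).2 b) => Ob.
    by apply: (Exi Wj sh Sj Ai); exists x.
  apply: (Exj Wi (- sh) Si Aj); exists (x + sh); first by rewrite -qjE; apply: first_divergence_sym.
  rewrite (_ : x + sh + - sh = x); last lia.
  by move: Ob; rewrite Ox; case: (lf Wi x).2; case: (b).
move=> y Iy; case: (Z_le_gt_dec qi y) => yq.
- by have [|[x _ /noD]] := agree_or_diverge_r Si Sj Ai; [apply|].
- by have [|[x _ /noD]] := agree_or_diverge_l Si Sj Ai; [apply => //; lia|].
Qed.

Lemma extremal_unique Wi Wj qi qj b : S Wi -> S Wj -> inrange Wi qi -> inrange Wj qj ->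
  lf Wi qi = lf Wj qj -> extremal Wi qi b -> extremal Wj qj b ->
  same_word (shift_word Wi (qj - qi)) Wj.
Proof.
move=> Si Sj Ii Ij E Exi Exj.
apply: same_word_of_agree (S_maximal Si) (S_maximal Sj) _ => y.
by case/(extremal_agree Si Sj Ii Ij E Exi Exj) => _ [].
Qed.

End Extremal.

Section Faces.
Variables (V A : finType) (s t : A -> V) (r : rel A).
Hypothesis LG : locally_gentle s t r.
Variables (n : nat) (ws : 'I_n -> word A).
Hypothesis ws_walk : forall i, is_walk s t r (ws i).
Hypothesis ws_nonkissing : forall i j, ~ kisses s t (ws i) (ws j).
Hypothesis ws_distinct : forall i j, i != j -> ~ walk_equiv (ws i) (ws j).

(* Reversals are included since a walk may run along another one backwards. *)
Definition walk_or_rev (X : word A) := exists i, X = ws i \/ X = rev_word (ws i).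

Lemma ws_maximal i : maximal_string s t r (ws i).
Proof. by case: (ws_walk i) => Si [Mi _]. Qed.

Lemma walk_or_rev_ws i : walk_or_rev (ws i).
Proof. by exists i; left. Qed.

Lemma walk_or_rev_maximal X : walk_or_rev X -> maximal_string s t r X.
Proof. by case=> i [->|->]; [|apply: maximal_string_rev]; apply: ws_maximal. Qed.

Lemma walk_or_rev_nonkissing X Y : walk_or_rev X -> walk_or_rev Y -> ~ kiss0 s t X Y.
Proof.
move=> [i [->|->]] [j [->|->]] K; apply: (@ws_nonkissing i j).
- by left.
- by right.
- right; rewrite -[ws i]rev_wordK.
  exact: kiss0_rev (maximal_string_rev (ws_maximal i)) (ws_maximal j) K.
- left; rewrite -[ws i]rev_wordK -[ws j]rev_wordK.
  exact: kiss0_rev (maximal_string_rev (ws_maximal i)) (maximal_string_rev (ws_maximal j)) K.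
Qed.

Lemma walk_or_rev_turns : exists M, forall X m, walk_or_rev X -> turn X m -> (Z.abs m <= M)%Z.
Proof.
have [M HM] := @finite_uniform_bound _ (fun i M => forall m, turn (ws i) m -> (Z.abs m <= M)%Z)
  (fun i m m' H mm' x Tx => Z.le_trans _ _ _ (H x Tx) mm')
  (fun i => turns_bounded (proj2 (proj2 (ws_walk i)))).
exists (M + 1)%Z => X m [i [->|->]] Tm; first by have := HM i m Tm; lia.
by have := HM i _ (turn_rev Tm); lia.
Qed.

Lemma card_nonkissing_walks : n <= 4 * #|A|.
Proof.
have [M HM] := walk_or_rev_turns.
have ext i : exists p : (A * bool) * bool,
    exists2 q, inrange (ws i) q & extremal walk_or_rev (ws i) q p.2 /\ lf (ws i) q = p.1.
  have [q [b [Iq Eq]]] :=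
    extremal_exists LG walk_or_rev_maximal walk_or_rev_nonkissing (walk_or_rev_ws i) HM
    (proj2 (proj2 (ws_walk i))).
  by exists (lf (ws i) q, b), q.
have [g Hg] := choice _ ext.
suff /leq_card : injective g by rewrite card_ord !card_prod card_bool; lia.
move=> i j gij; apply/eqP; apply: contraT => ij; exfalso; apply: (ws_distinct ij).
have [qi Ii [Ei Li]] := Hg i; have [qj Ij [Ej Lj]] := Hg j.
rewrite gij in Ei Li; exists (qj - qi)%Z; left.
apply: (extremal_unique LG walk_or_rev_maximal (walk_or_rev_ws i) (walk_or_rev_ws j) Ii Ij _ Ei Ej).
by rewrite Li Lj.
Qed.

End Faces.

Lemma card_blossom_arrows (V A : finType) (s t : A -> V) (r : rel A)
    (V' A' : finType) (s' t' : A' -> V') (r' : rel A') (iv : V -> V') (ia : A -> A') :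
  is_blossoming s t r s' t' r' iv ia -> #|A'| <= 4 * #|V|.
Proof.
move=> [_ [_ [ia_ends [_ [_ [deg [_ new_ends]]]]]]].
have endpoint a : exists v, t' a = iv v \/ s' a = iv v.
  case: (boolP (a \in codom ia)) => [/codomP [a0 ->]|Na].
    by exists (t a0); left; case: (ia_ends a0).
  move: (new_ends a Na); case: (boolP (s' a \in codom iv)) => [/codomP [v ->] _|_ /= tv].
    by exists v; right.
  by case/codomP: (negbNE tv) => v ->; exists v; left.
have card_sum (P : pred A') : \sum_a (P a : nat) = #|[set a | P a]|.
  by rewrite -sum1dep_card [RHS]big_mkcond; apply: eq_bigr => a _; case: (P a).
apply: (@leq_trans (\sum_a \sum_v ((t' a == iv v) + (s' a == iv v)))).
  rewrite -sum1_card; apply: leq_sum => a _; have [v Hv] := endpoint a.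
  rewrite (bigD1 v) //=; apply: leq_trans (leq_addr _ _).
  by case: Hv => ->; rewrite eqxx // addnC.
rewrite exchange_big /= -sum1_card big_distrr /=; apply: leq_sum => v _.
rewrite big_split /= !card_sum muln1.
by case: (deg v) => -> ->.
Qed.

Theorem lemma5p11 (V A : finType) (s t : A -> V) (r : rel A) :
  locally_gentle s t r ->
  exists N : nat,
    forall (V' A' : finType) (s' t' : A' -> V') (r' : rel A')
           (iv : V -> V') (ia : A -> A'),
      is_blossoming s t r s' t' r' iv ia ->
      forall (n : nat) (ws : 'I_n -> word A'),
        (forall i, is_walk s' t' r' (ws i)) ->
        (forall i j, i != j -> ~ walk_equiv (ws i) (ws j)) ->
        (forall i j, ~ kisses s' t' (ws i) (ws j)) ->
        (n <= N)%N.
Proof.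
move=> _; exists (16 * #|V|) => V' A' s' t' r' iv ia HB n ws walks distinct nonkissing.
have [_ [_ [_ [_ [LG' _]]]]] := HB.
have := card_nonkissing_walks LG' walks nonkissing distinct.
have := card_blossom_arrows HB; lia.
Qed.
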